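(* Let $K$ be a field of characteristic $\neq2$ with involution $a\mapsto\bar a$, let $\varepsilon\in\{1,-1\}$ with $\varepsilon=1$ if the involution is nonidentity, and let $\Phi$ be an $n\times n$ Frobenius block with characteristic polynomial $\chi(x)$. A nonsingular matrix $X$ with $X=X^*$ and $X\Phi=\varepsilon(X\Phi)^*$ exists if and only if (B1) $\chi(x)=\varepsilon^n\bar\chi(\varepsilon x)$, and (B2) $\chi(x)\notin\{x^2,x^4,x^6,\dots\}$ if $\varepsilon=-1$. When these hold, one can take $X=[\varepsilon^ia_{i+j}]_{i,j=1}^n$, where $(a_2,a_3,\dots,a_{2n})$ is the $\chi$-recurrent sequence determined by $(a_2,\dots,a_{n+1})=(1,0,\dots,0)$ if $\Phi$ is nonsingular and $(a_2,\dots,a_{n+1})=(0,\dots,0,1)$ if $\Phi$ is singular.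
   Context: $M^*=[\bar m_{ji}]$ for $M=[m_{ij}]$. For $f=a_0x^n+\dots+a_n$, $\bar f=\bar a_0x^n+\dots+\bar a_n$. A Frobenius block is an $n\times n$ matrix with ones on the subdiagonal, last column $(-c_n,\dots,-c_1)^T$, zeros elsewhere, and characteristic polynomial $x^n+c_1x^{n-1}+\dots+c_n$ a power of an irreducible polynomial. For $f(x)=\gamma_0x^m+\dots+\gamma_m$, a sequence $(a_q,\dots,a_r)$ is $f$-recurrent if $\gamma_0a_{l+m}+\gamma_1a_{l+m-1}+\dots+\gamma_ma_l=0$ for $q\le l\le r-m$. *)

From mathcomp Require Import all_boot all_order all_algebra.
Set Implicit Arguments. Unset Strict Implicit. Unset Printing Implicit Defensive.
Import GRing.Theory.
Local Open Scope ring_scope.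

Definition cstar (K : fieldType) (inv : K -> K) n (M : 'M[K]_n) : 'M[K]_n :=
  \matrix_(i, j) inv (M j i).

(* Frobenius-type matrix of a monic p = x^n + c_1 x^(n-1) + ... + c_n:
   ones on the subdiagonal, last column (-c_n, ..., -c_1)^T, zeros elsewhere.
   Row i (0-indexed) of the last column holds -c_(n-i) = - p`_i. *)
Definition frob_mx (K : fieldType) n (p : {poly K}) : 'M[K]_n :=
  \matrix_(i < n, j < n)
    ((i == j.+1 :> nat)%:R + (j == n.-1 :> nat)%:R * - p`_i).

Definition frobenius_block (K : fieldType) n (A : 'M[K]_n) : Prop :=
  exists p : {poly K},
    [/\ p \is monic, size p = n.+1, A = frob_mx n p,
        char_poly A = p &
        exists (q : {poly K}) (k : nat), [/\ (0 < k)%N, irreducible_poly q & p = q ^+ k]].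

Definition recurrent (K : fieldType) (f : {poly K}) (q r : nat) (a : nat -> K)
  : Prop :=
  let m := (size f).-1 in
  forall l : nat, (q <= l)%N -> (l + m <= r)%N ->
    \sum_(i < m.+1) f`_(m - i) * a (l + m - i)%N = 0.

(* Necessity: X intertwines Phi with eps Phi^*, so chi is also the characteristic
   polynomial of eps Phi^*, which is (B1).  If eps = -1 the involution is the
   identity, so X is symmetric and X Phi skew-symmetric; for chi = x^(2k), Phi is
   the nilpotent shift of even size and these symmetries force the last row of X
   to vanish, which gives (B2).
   Sufficiency: (B1) says conj(c_j) = eps^(n+j) c_j, so by induction along the
   recurrence every term of a chi-recurrent sequence with conj(a_k) = eps^k a_k
   initially satisfies conj(a_s) = eps^s a_s.  This makes X = [eps^i a_(i+j)]
   Hermitian, and X Phi = [eps^i a_(i+j+1)] eps-Hermitian, the recurrence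
   supplying its last column.  The initial values make X triangular up to a
   permutation of its columns, with nonzero diagonal; (B2) is what guarantees
   eps^(n+1) = 1 when Phi is singular.  Such a sequence exists since the entries
   of the powers of Phi are chi-recurrent by Cayley-Hamilton. *)

From mathcomp Require Import all_boot all_order all_algebra perm zify.
Set Implicit Arguments.
Unset Strict Implicit.
Unset Printing Implicit Defensive.
Import GRing.Theory.
Local Open Scope ring_scope.

Section SquareRootOfOne.
Variables (R : nzRingType) (e : R).
Hypothesis e2 : e * e = 1.

Lemma sqr1_exprE m : e ^+ m = e ^+ odd m.
Proof.
rewrite -{1}(odd_double_half m) exprD -muln2 mulnC exprM expr2 e2 expr1n.
by rewrite mulr1.
Qed.

Lemma sqr1_expr_odd m k : odd m = odd k -> e ^+ m = e ^+ k.
Proof. by move=> mk; rewrite sqr1_exprE mk -sqr1_exprE. Qed.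

Lemma sqr1_neq0 : e != 0.
Proof. by apply: contra_eqN e2 => /eqP->; rewrite mul0r eq_sym oner_eq0. Qed.

End SquareRootOfOne.

Lemma coef_comp_polyZX (R : comNzRingType) (p : {poly R}) (c : R) k :
  (p \Po (c *: 'X))`_k = p`_k * c ^+ k.
Proof.
have -> : p \Po (c *: 'X) = \poly_(i < size p) (p`_i * c ^+ i).
  by rewrite comp_polyE poly_def; apply: eq_bigr => i _; rewrite exprZn scalerA.
by rewrite coef_poly; case: ltnP => // /(nth_default 0) ->; rewrite mul0r.
Qed.

Section CharPoly.
Variable K : fieldType.

Lemma char_polyZ n (A : 'M[K]_n) c : c != 0 ->
  char_poly (c *: A) = c ^+ n *: (char_poly A \Po (c^-1 *: 'X)).
Proof.
move=> c_neq0.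
have scale_mx : map_mx (comp_poly (c^-1 *: 'X)) (char_poly_mx A) =
                c^-1%:P *: char_poly_mx (c *: A).
  apply/matrixP => i j; rewrite !mxE; case: (i == j) => /=.
    by rewrite mulr1n comp_polyB comp_polyX comp_polyC mulrBr mul_polyC polyCM
      mulrA -polyCM mulVf // mul1r.
  by rewrite !mulr0n !sub0r raddfN /= comp_polyC mulrN polyCM mulrA -polyCM
    mulVf // mul1r.
have := congr1 determinant scale_mx; rewrite det_map_mx detZ /char_poly => ->.
by rewrite -polyC_exp mul_polyC scalerA -exprMn mulfV // expr1n scale1r.
Qed.

Lemma char_poly_trmx n (A : 'M[K]_n) : char_poly A^T = char_poly A.
Proof.
rewrite /char_poly -det_tr; congr determinant.
by apply/matrixP => i j; rewrite !mxE eq_sym.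
Qed.

Lemma char_poly_intertwined n (P A B : 'M[K]_n) :
  P \in unitmx -> P *m A = B *m P -> char_poly A = char_poly B.
Proof.
move=> P_unit PA_BP.
have : map_mx polyC P *m char_poly_mx A = char_poly_mx B *m map_mx polyC P.
  rewrite /char_poly_mx mulmxBr mulmxBl -!map_mxM PA_BP.
  by rewrite -scalemx1 -scalemxAl -scalemxAr mulmx1 mul1mx.
move/(congr1 determinant); rewrite !det_mulmx det_map_mx [_ * (_ %:P)]mulrC.
by apply: mulfI; rewrite polyC_eq0 -unitfE -unitmxE.
Qed.

End CharPoly.

Section ConjugateTranspose.
Variables (K : fieldType) (inv : {rmorphism K -> K}).

Lemma cstarE n (M : 'M[K]_n) : cstar inv M = (map_mx inv M)^T.
Proof. by apply/matrixP => i j; rewrite !mxE. Qed.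

Lemma cstarM n (A B : 'M[K]_n) : cstar inv (A *m B) = cstar inv B *m cstar inv A.
Proof. by rewrite !cstarE map_mxM trmx_mul. Qed.

Lemma char_poly_cstar n (A : 'M[K]_n) :
  char_poly (cstar inv A) = map_poly inv (char_poly A).
Proof. by rewrite cstarE char_poly_trmx map_char_poly. Qed.

End ConjugateTranspose.

Definition herm_solution {K : fieldType} (inv : K -> K) (e : K) {n}
    (A X : 'M[K]_n) :=
  [/\ X \in unitmx, X = cstar inv X & X *m A = e *: cstar inv (X *m A)].

Lemma herm_solution_char_poly (K : fieldType) (inv : {rmorphism K -> K}) e n
    (A X : 'M[K]_n) :
  e * e = 1 -> herm_solution inv e A X ->
  char_poly A = e ^+ n *: (map_poly inv (char_poly A) \Po (e *: 'X)).
Proof.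
move=> e2 [X_unit X_herm XA_herm].
have e_neq0 := sqr1_neq0 e2.
have inv_e : e^-1 = e by apply: (mulfI e_neq0); rewrite mulfV.
have : X *m A = (e *: cstar inv A) *m X.
  by rewrite {1}XA_herm cstarM -X_herm scalemxAl.
move=> /(char_poly_intertwined X_unit) {1}->.
by rewrite char_polyZ // char_poly_cstar inv_e.
Qed.

Lemma big_ord_mul_delta (R : nzRingType) n (F : 'I_n.+1 -> R) m :
  \sum_(k < n.+1) F k * (k == m :> nat)%:R =
  if (m < n.+1)%N then F (inord m) else 0.
Proof.
case: ltnP => [m_lt | m_ge].
  rewrite (bigD1 (inord m)) //= inordK // eqxx mulr1 big1 ?addr0 // => k k_neq.
  suff /negbTE-> : (k != m :> nat) by rewrite mulr0.
  by apply: contra k_neq => /eqP k_m; apply/eqP/val_inj; rewrite /= inordK // k_m.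
apply: big1 => k _; suff /negbTE-> : (k != m :> nat) by rewrite mulr0.
by rewrite neq_ltn (leq_trans (ltn_ord k) m_ge).
Qed.

Section FrobeniusMatrix.
Variables (K : fieldType) (n : nat) (p : {poly K}).
Local Notation Phi := (frob_mx n.+1 p).

Lemma mul_frob_mx (X : 'M[K]_n.+1) i j :
  (X *m Phi) i j = (if (j.+1 < n.+1)%N then X i (inord j.+1) else 0)
                   + (j == n :> nat)%:R * - \sum_k X i k * p`_k.
Proof.
rewrite !mxE; under eq_bigr => k _ do rewrite mxE mulrDr.
rewrite big_split /= big_ord_mul_delta; congr (_ + _).
rewrite mulrN mulr_sumr -sumrN; apply: eq_bigr => k _.
by rewrite mulrN mulrCA mulrN.
Qed.

Lemma frob_mx_pow_col0 (i : 'I_n.+1) j :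
  (j < n.+1)%N -> (Phi ^+ j) i 0 = (i == j :> nat)%:R.
Proof.
elim: j i => [|j IHj] i lt_j_n; first by rewrite expr0 mxE.
rewrite exprS -mulmxE mxE.
under eq_bigr => k _ do rewrite (IHj k (ltnW lt_j_n)).
rewrite big_ord_mul_delta ifT ?(ltnW lt_j_n) // mxE inordK ?(ltnW lt_j_n) //.
by rewrite (_ : (j == n.+1.-1 :> nat) = false) ?mul0r ?addr0 //; apply/negbTE; lia.
Qed.

End FrobeniusMatrix.

Lemma recurrent_monicP (K : fieldType) (p : {poly K}) N q r (a : nat -> K) :
  p \is monic -> size p = N.+1 ->
  recurrent p q r a <->
  (forall l, (q <= l)%N -> (l + N <= r)%N ->
     a (l + N)%N = - \sum_(t < N) p`_t * a (l + t)%N).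
Proof.
move=> /monicP p_monic size_p.
have lead_p : p`_N = 1 by rewrite -p_monic lead_coefE size_p.
have sumE l : \sum_(i < N.+1) p`_(N - i) * a (l + N - i)%N =
              \sum_(t < N) p`_t * a (l + t)%N + a (l + N)%N.
  rewrite (reindex_inj rev_ord_inj) big_ord_recr /= subnn !subn0 lead_p mul1r.
  congr (_ + _); apply: eq_bigr => t _.
  have t_lt := ltn_ord t; congr (p`_ _ * a _); lia.
rewrite /recurrent size_p /=; split => rec l l_ge l_le.
  by apply/eqP; rewrite -addr_eq0 addrC -sumE rec.
by rewrite sumE rec // addrN.
Qed.

Lemma horner_mx_coef (K : fieldType) n (A : 'M[K]_n.+1) (p : {poly K}) :
  horner_mx A p = \sum_(t < size p) p`_t *: A ^+ t.
Proof.
rewrite -{1}(coefK p) poly_def rmorph_sum; apply: eq_bigr => t _.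
by rewrite -mul_polyC rmorphM /= horner_mx_C rmorphXn /= horner_mx_X
  -mul_scalar_mx mulmxE.
Qed.

Lemma recurrent_mx_pow (K : fieldType) n (A : 'M[K]_n.+1) i j m r :
  recurrent (char_poly A) m r (fun k => (A ^+ (k - m)) i j).
Proof.
apply/recurrent_monicP; rewrite ?char_poly_monic ?size_char_poly // => l l_ge _.
have : (A ^+ (l - m) *m horner_mx A (char_poly A)) i j = 0.
  by rewrite Cayley_Hamilton mulmx0 mxE.
rewrite horner_mx_coef size_char_poly mulmx_sumr summxE big_ord_recr /=.
have /monicP : char_poly A \is monic := char_poly_monic A.
rewrite lead_coefE size_char_poly /= => ->.
rewrite scale1r mulmxE -exprD addrC => /eqP; rewrite addr_eq0 => /eqP.
rewrite (_ : (l - m + n.+1 = l + n.+1 - m)%N); last by lia.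
move=> ->; congr (- _); apply: eq_bigr => t _.
by rewrite -scalerAr mxE -exprD; congr (_ * (A ^+ _) i j); lia.
Qed.

Lemma unitmx_perm_trig (K : fieldType) n (X : 'M[K]_n) (f : 'I_n -> 'I_n) :
  injective f -> (forall i j : 'I_n, (i < j)%N -> X i (f j) = 0) ->
  (forall i, X i (f i) != 0) -> X \in unitmx.
Proof.
move=> f_inj X_trig X_diag; pose s := perm f_inj.
have trig : is_trig_mx (col_perm s X).
  by apply/is_trig_mxP => i j lt_ij; rewrite mxE permE X_trig.
have : \det (col_perm s X) != 0.
  by rewrite (det_trig trig); apply/prodf_neq0 => i _; rewrite mxE permE.
by rewrite col_permE det_mulmx unitmxE unitfE; apply: contra => /eqP->; rewrite mul0r.
Qed.

Definition signed_hankel (K : fieldType) (e : K) n (a : nat -> K) : 'M[K]_n.+1 :=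
  \matrix_(i, j) (e ^+ i.+1 * a (i.+1 + j.+1)%N).

Lemma signed_hankel_unitmx_last (K : fieldType) (e : K) n (a : nat -> K) :
  e * e = 1 ->
  (forall k, (2 <= k <= n.+2)%N -> a k = (k == n.+2)%:R) ->
  signed_hankel e n a \in unitmx.
Proof.
move=> e2 a_init; apply: (unitmx_perm_trig (@rev_ord_inj n.+1)) => [i j lt_ij | i].
  rewrite mxE /= a_init; last by have := ltn_ord j; lia.
  by rewrite (_ : (_ == _) = false) ?mulr0 //; apply/negbTE; have := ltn_ord j; lia.
rewrite mxE /= a_init; last by have := ltn_ord i; lia.
rewrite (_ : (_ == n.+2) = true) ?mulr1; last by have := ltn_ord i; lia.
by rewrite expf_neq0 // sqr1_neq0.
Qed.

Section SignedHankel.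
Variables (K : fieldType) (inv : {rmorphism K -> K}) (e : K).
Hypotheses (e2 : e * e = 1) (inv_e : inv e = e).
Variables (n : nat) (p : {poly K}) (a : nat -> K).
Local Notation N := n.+1.
Hypotheses (p_monic : p \is monic) (size_p : size p = N.+1).
Hypothesis inv_coef : forall k, inv p`_k = e ^+ (N + k) * p`_k.
Hypothesis a_rec : recurrent p 2 (2 * N) a.

Lemma inv_recurrent (b : nat -> K) r : recurrent p 2 r b ->
    (forall k, (2 <= k <= N.+1)%N -> inv (b k) = e ^+ k * b k) ->
  forall s, (2 <= s <= r)%N -> inv (b s) = e ^+ s * b s.
Proof.
move=> /(recurrent_monicP _ _ _ p_monic size_p) b_rec b_init.
elim/ltn_ind=> s IHs /andP[s_ge s_le].
have [s_small | s_large] := leqP s N.+1; first by rewrite b_init ?s_ge.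
have -> : s = (s - N + N)%N by lia.
rewrite b_rec ?rmorphN ?rmorph_sum ?mulrN ?mulr_sumr; try lia.
congr (- _); apply: eq_bigr => t _; have t_lt := ltn_ord t.
rewrite rmorphM inv_coef IHs; try lia.
rewrite mulrCA !mulrA -!exprD; congr (_ * _ * _); apply: sqr1_expr_odd => //.
by rewrite !oddD; case: (odd _); case: (odd _); case: (odd _).
Qed.

(* The last column of signed_hankel *m Phi needs the term a_(2N+1), which the
   recurrence determines but the hypotheses do not provide. *)
Definition ext_seq s :=
  if (s <= 2 * N)%N then a s else - \sum_(t < N) p`_t * a (s - N + t)%N.

Lemma ext_seq_recurrent : recurrent p 2 (2 * N).+1 ext_seq.
Proof.
apply/(recurrent_monicP _ _ _ p_monic size_p) => l l_ge l_le.
have ext_a t : (t < N)%N -> ext_seq (l + t) = a (l + t).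
  by move=> t_lt; rewrite /ext_seq ifT //; lia.
under eq_bigr => t _ do rewrite ext_a //.
rewrite /ext_seq; case: ifP => [l_le' | _]; last by rewrite addnK.
by move: a_rec => /(recurrent_monicP _ _ _ p_monic size_p) ->.
Qed.

Local Notation signed_hankel := (signed_hankel e n a).

Hypothesis inv_a_init : forall k, (2 <= k <= N.+1)%N -> inv (a k) = e ^+ k * a k.

Lemma inv_ext_seq s :
  (2 <= s <= (2 * N).+1)%N -> inv (ext_seq s) = e ^+ s * ext_seq s.
Proof.
move=> s_range; apply: (inv_recurrent ext_seq_recurrent _ s_range) => k k_range.
by rewrite /ext_seq ifT ?inv_a_init //; lia.
Qed.

Lemma signed_hankel_herm : signed_hankel = cstar inv signed_hankel.
Proof.
apply/matrixP => i j; have i_lt := ltn_ord i; have j_lt := ltn_ord j.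
have a_ext s : (s <= 2 * N)%N -> a s = ext_seq s by move=> ?; rewrite /ext_seq ifT.
rewrite !mxE rmorphM rmorphXn inv_e !a_ext ?inv_ext_seq; try lia.
rewrite mulrA -exprD addnC; congr (_ * _); apply: sqr1_expr_odd => //.
by rewrite !oddD; case: (odd _); case: (odd _).
Qed.

Lemma mul_signed_hankel_frob i j :
  (signed_hankel *m frob_mx N p) i j = e ^+ i.+1 * ext_seq (i + j + 3).
Proof.
rewrite mul_frob_mx; have i_lt := ltn_ord i; have j_lt := ltn_ord j.
case: ltnP => j_last.
  rewrite (_ : (j == n :> nat) = false) ?mul0r ?addr0; last by apply/negbTE; lia.
  by rewrite mxE inordK // /ext_seq ifT; [congr (_ * a _); lia | lia].
rewrite (_ : (j == n :> nat)) ?mul1r ?add0r; last by lia.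
have -> : (i + j + 3 = i + 2 + N)%N by lia.
move: ext_seq_recurrent => /(recurrent_monicP _ _ _ p_monic size_p) ->; try lia.
rewrite mulrN mulr_sumr; congr (- _); apply: eq_bigr => k _.
rewrite /ext_seq ifT; last by have := ltn_ord k; lia.
by rewrite mxE -mulrA [a _ * _]mulrC; congr (_ * (_ * a _)); lia.
Qed.

Lemma signed_hankel_frob_skew :
  signed_hankel *m frob_mx N p = e *: cstar inv (signed_hankel *m frob_mx N p).
Proof.
apply/matrixP => i j; have i_lt := ltn_ord i; have j_lt := ltn_ord j.
rewrite [in RHS]mxE /cstar [in RHS]mxE !mul_signed_hankel_frob.
rewrite rmorphM rmorphXn inv_e inv_ext_seq; last by lia.
rewrite !mulrA -exprS -exprD (addnC j); congr (_ * _); apply: sqr1_expr_odd => //.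
by rewrite /= !oddD /=; case: (odd _); case: (odd _).
Qed.

Lemma signed_hankel_unitmx_first : p`_0 != 0 ->
  (forall k, (2 <= k <= N.+1)%N -> a k = (k == 2)%:R) -> signed_hankel \in unitmx.
Proof.
move=> p0_neq0 a_init.
pose f (j : 'I_N) : 'I_N := inord (if j == 0 :> nat then 0 else N - j)%N.
have f_val j : f j = (if j == 0 :> nat then 0 else N - j)%N :> nat.
  by rewrite inordK //; case: eqP; have := ltn_ord j; lia.
have f_inj : injective f.
  move=> j k /(congr1 (@nat_of_ord N)); rewrite !f_val => fjk; apply: val_inj => /=.
  by move: fjk; have := ltn_ord j; have := ltn_ord k; case: eqP; case: eqP; lia.
apply: (unitmx_perm_trig f_inj) => [i j lt_ij | i]; rewrite mxE f_val.
  rewrite ifF; last by apply/negbTE; lia.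
  rewrite a_init; last by have := ltn_ord j; lia.
  by rewrite (_ : (_ == _) = false) ?mulr0 //; apply/negbTE; have := ltn_ord j; lia.
have e_neq0 := sqr1_neq0 e2; have i_lt := ltn_ord i.
have [i0 | i_neq0] := eqVneq (nat_of_ord i) 0%N.
  by rewrite i0 /= a_init // mulr1 expf_neq0.
have -> : (i.+1 + (N - i).+1 = 2 + N)%N by lia.
move: a_rec => /(recurrent_monicP _ _ _ p_monic size_p) ->; try lia.
rewrite big_ord_recl /= a_init // mulr1 big1 ?addr0.
  by rewrite mulf_neq0 ?oppr_eq0 // expf_neq0.
move=> t _; rewrite a_init; last by have := ltn_ord t; rewrite /bump /=; lia.
by rewrite (_ : (_ == _) = false) ?mulr0.
Qed.

End SignedHankel.

Lemma frob_Xn_sym_skew_singular (K : fieldType) n (X : 'M[K]_n.+1) :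
    (2%:R : K) != 0 -> odd n -> X = X^T ->
    X *m frob_mx n.+1 'X^(n.+1) = - (X *m frob_mx n.+1 'X^(n.+1))^T ->
  X \notin unitmx.
Proof.
move=> char2 n_odd X_sym; set Y := X *m _ => Y_skew.
have Y_antisym i j : Y i j = - Y j i by rewrite {1}Y_skew !mxE.
have YE i j : Y i j = if (j.+1 < n.+1)%N then X i (inord j.+1) else 0.
  rewrite /Y mul_frob_mx big1 ?oppr0 ?mulr0 ?addr0 // => k _.
  by rewrite coefXn ltn_eqF ?mulr0.
have X_symE i j : X i j = X j i by rewrite {1}X_sym mxE.
have last_row0 j : (j < n)%N -> X (inord n) (inord j.+1) = 0.
  move=> j_lt; have := Y_antisym (inord n) (inord j).
  by rewrite !YE !inordK ?ltnS ?ltnn ?j_lt ?oppr0 // ltnW.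
have shift_sign i j : (i < n)%N -> (j < n)%N ->
    X (inord i) (inord j.+1) = - X (inord i.+1) (inord j).
  move=> i_lt j_lt; have := Y_antisym (inord i) (inord j).
  rewrite !YE !inordK ?ltnS ?i_lt ?j_lt => [->||]; try lia.
  by rewrite [X (inord j) _]X_symE.
pose g i := X (inord i) (inord (n - i)).
have g_sign i : (i <= n)%N -> g i = (-1) ^+ i * g 0.
  elim: i => [|i IHi] i_le; first by rewrite expr0 mul1r.
  rewrite exprS -mulrA -IHi; last by lia.
  rewrite /g (_ : (n - i = (n - i.+1).+1)%N); last by lia.
  by rewrite shift_sign ?mulN1r ?opprK //; lia.
(* The antidiagonal of X alternates in sign and has even length, yet X is symmetric. *)
have corner0 : X (inord n) (inord 0) = 0.
  have := g_sign n (leqnn n).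
  rewrite /g subnn subn0 -signr_odd n_odd expr1 mulN1r [X (inord 0) _]X_symE.
  move=> /eqP; rewrite -subr_eq0 opprK -mulr2n -mulr_natr.
  by rewrite mulf_eq0 (negbTE char2) orbF => /eqP.
rewrite unitmxE unitfE negbK; apply/det0P; exists (delta_mx 0 (inord n)).
  apply/eqP => /matrixP/(_ 0 (inord n)).
  by rewrite !mxE !eqxx => /eqP; rewrite oner_eq0.
rewrite -rowE; apply/rowP => j; rewrite !mxE -[j]inord_val.
by case: (nat_of_ord j) (ltn_ord j) => [|j'] j_lt; rewrite ?corner0 ?last_row0.
Qed.

Lemma irreducible_pow_coef0 (K : fieldType) (p q : {poly K}) k :
  irreducible_poly q -> p = q ^+ k -> p \is monic -> p`_0 = 0 -> p = 'X^((size p).-1).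
Proof.
move=> [_ q_irr] p_qk p_monic p0.
have : 'X %| q.
  rewrite -(subr0 'X) -root_factor_theorem; apply/eqP.
  have : p.[0] = 0 by rewrite horner_coef0.
  by rewrite p_qk horner_exp => /eqP; rewrite expf_eq0 => /andP[_ /eqP].
move/q_irr; rewrite size_polyX => /(_ isT) X_q.
have /eqP p_Xk : p == 'X^k by rewrite -eqp_monic ?monicXn // p_qk eqp_exp // eqp_sym.
by rewrite {1}p_Xk p_Xk size_polyXn.
Qed.

Lemma coef_conj_reciprocal (K : fieldType) (inv : {rmorphism K -> K}) e N
    (p : {poly K}) :
    e * e = 1 -> p = e ^+ N *: (map_poly inv p \Po (e *: 'X)) ->
  forall j, inv p`_j = e ^+ (N + j) * p`_j.
Proof.
move=> e2 p_rec j; have /(congr1 (fun r : {poly K} => r`_j)) := p_rec.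
rewrite coefZ coef_comp_polyZX coef_map /= => {2}->.
rewrite [inv _ * _]mulrC !mulrA -!exprD (sqr1_expr_odd e2 (_ : _ = odd 0)) ?mul1r //.
by rewrite !oddD; case: (odd N); case: (odd j).
Qed.

Lemma size_irreducible_pow (K : fieldType) (q : {poly K}) k :
  irreducible_poly q -> (0 < k)%N -> (1 < size (q ^+ k))%N.
Proof.
move=> [q_gt1 _] k_gt0.
have : (0 < (size (q ^+ k)).-1)%N.
  by rewrite size_exp muln_gt0 k_gt0 andbT -subn1 subn_gt0.
by case: size.
Qed.

Section FrobeniusBlock.
Variables (K : fieldType) (inv : {rmorphism K -> K}) (e : K).
Hypothesis e_pm1 : e = 1 \/ e = -1.
Variables (n : nat) (p q : {poly K}) (k : nat).
Local Notation N := n.+1.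
Local Notation Phi := (frob_mx N p).
Hypotheses (p_monic : p \is monic) (size_p : size p = N.+1).
Hypothesis char_Phi : char_poly Phi = p.
Hypotheses (q_irr : irreducible_poly q) (p_qk : p = q ^+ k).

Local Notation B1 := (p = e ^+ N *: (map_poly inv p \Po (e *: 'X))).
Local Notation B2 := (e = -1 -> ~ exists k, (0 < k)%N /\ p = 'X^(2 * k)).

Let e2 : e * e = 1.
Proof. by case: e_pm1 => ->; rewrite ?mulr1 ?mulrNN ?mulr1. Qed.

Let inv_e : inv e = e.
Proof. by case: e_pm1 => ->; rewrite ?rmorph1 ?rmorphN1. Qed.

Local Notation delta_init a := (forall k, (2 <= k <= N.+1)%N ->
  a k = (if Phi \in unitmx then (k == 2)%:R else (k == N.+1)%:R)).

Lemma frob_unitmxE : (Phi \in unitmx) = (p`_0 != 0).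
Proof.
by rewrite -[in RHS]char_Phi char_poly_det mulf_eq0 signr_eq0 unitmxE unitfE.
Qed.

Lemma frob_singular_Xn : Phi \notin unitmx -> p = 'X^N.
Proof.
rewrite frob_unitmxE negbK => /eqP p0.
by rewrite {1}(irreducible_pow_coef0 q_irr p_qk p_monic p0) size_p.
Qed.

Lemma delta_init_exists : exists a, delta_init a /\ recurrent p 2 (2 * N) a.
Proof.
pose i0 : 'I_N := if Phi \in unitmx then ord0 else ord_max.
exists (fun j => (Phi ^+ (j - 2)) i0 0); split; last first.
  by rewrite -{1}char_Phi; apply: recurrent_mx_pow.
move=> j j_range; rewrite frob_mx_pow_col0 /i0; last by lia.
by case: (Phi \in unitmx) => /=; congr (_ %:R); apply/eqP; lia.
Qed.

Lemma delta_init_solution a :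
  B1 -> B2 -> delta_init a -> recurrent p 2 (2 * N) a ->
  herm_solution inv e Phi (signed_hankel e n a).
Proof.
move=> p_rec p_not_even a_init a_rec.
have inv_coef := coef_conj_reciprocal e2 p_rec.
have sing_e : Phi \notin unitmx -> e ^+ N.+1 = 1.
  move=> Phi_sing; case: e_pm1 => [-> | e_neg]; first by rewrite expr1n.
  have N_odd : odd N.
    apply: contraT => N_even; exfalso.
    apply: (p_not_even e_neg); exists N./2; split.
      by rewrite half_gt0 ltnS lt0n; apply: contraNneq N_even => ->.
    by rewrite (frob_singular_Xn Phi_sing) mul2n even_halfK.
  by rewrite (sqr1_expr_odd e2 (_ : _ = odd 0)) // oddS N_odd.
have inv_a_init j : (2 <= j <= N.+1)%N -> inv (a j) = e ^+ j * a j.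
  move=> j_range; rewrite a_init //; case: ifP => Phi_unit; rewrite rmorph_nat;
    case: eqP => [-> | _]; rewrite ?mulr0 ?mulr1 // ?sing_e ?Phi_unit //.
split.
- case Phi_unit : (Phi \in unitmx).
    apply: (signed_hankel_unitmx_first e2 p_monic size_p a_rec).
      by rewrite -frob_unitmxE.
    by move=> j j_range; rewrite a_init // Phi_unit.
  by apply: (signed_hankel_unitmx_last e2) => j j_range; rewrite a_init // Phi_unit.
- exact: (signed_hankel_herm e2 inv_e p_monic size_p inv_coef a_rec inv_a_init).
- exact: (signed_hankel_frob_skew e2 inv_e p_monic size_p inv_coef a_rec inv_a_init).
Qed.

Lemma herm_solution_conditions X :
    (2%:R : K) != 0 -> ((exists x, inv x != x) -> e = 1) ->
  herm_solution inv e Phi X -> B1 /\ B2.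
Proof.
move=> char2 e_nonid sol; split.
  by have := herm_solution_char_poly e2 sol; rewrite char_Phi.
move=> e_neg [m [m_gt0 p_X2m]].
have inv_id x : inv x = x.
  apply/eqP; apply: contraT => x_moved; have e1 := e_nonid (ex_intro _ x x_moved).
  move: e_neg; rewrite e1 => /eqP; rewrite -subr_eq0 opprK -mulr2n.
  by rewrite (negbTE char2).
have cstar_tr (M : 'M[K]_N) : cstar inv M = M^T.
  by apply/matrixP => i j; rewrite !mxE inv_id.
have N_2m : N = (2 * m)%N by move: size_p; rewrite p_X2m size_polyXn => -[].
have n_odd : odd n by move/(congr1 odd): N_2m; rewrite /= oddM /= => /negbFE.
have p_XN : p = 'X^N by rewrite N_2m.
case: sol => X_unit X_herm XPhi_skew; move: X_unit; apply/negP.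
apply: (frob_Xn_sym_skew_singular char2 n_odd); first by rewrite -cstar_tr.
by rewrite -p_XN {1}XPhi_skew e_neg scaleN1r cstar_tr.
Qed.

End FrobeniusBlock.

Theorem theorem8 (K : fieldType) (inv : {rmorphism K -> K})
  (inv_invol : involutive inv) (char2 : (2%:R : K) != 0)
  (eps : K) (heps : eps = 1 \/ eps = -1)
  (heps_id : (exists a : K, inv a != a) -> eps = 1)
  (n : nat) (Phi : 'M[K]_n) (hPhi : frobenius_block Phi) :
  let chi := char_poly Phi in
  let B1 := chi = eps ^+ n *: ((map_poly inv chi) \Po (eps *: 'X)) in
  let B2 := eps = -1 -> ~ (exists k : nat, (0 < k)%N /\ chi = 'X^(2 * k)) in
  ((exists X : 'M[K]_n,
      [/\ X \in unitmx, X = cstar inv X &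
          X *m Phi = eps *: cstar inv (X *m Phi)])
   <-> (B1 /\ B2))
  /\
  (B1 -> B2 ->
   forall a : nat -> K,
     (forall k : nat, (2 <= k <= n.+1)%N ->
        a k = (if Phi \in unitmx then (k == 2)%N%:R else (k == n.+1)%N%:R)) ->
     recurrent chi 2 (2 * n) a ->
     let X := \matrix_(i < n, j < n) (eps ^+ i.+1 * a (i.+1 + j.+1)%N) in
     [/\ X \in unitmx, X = cstar inv X &
         X *m Phi = eps *: cstar inv (X *m Phi)]).
Proof.
case: hPhi => p [p_monic size_p -> char_Phi [q [k [k_gt0 q_irr p_qk]]]].
have [m n_m] : exists m, n = m.+1.
  have := size_irreducible_pow q_irr k_gt0; rewrite -p_qk size_p.
  by case: (n) => // m _; exists m.
subst n; rewrite char_Phi => chi B1 B2.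
have solution := delta_init_solution heps p_monic size_p char_Phi q_irr p_qk.
split; first split.
- by case=> X; apply: herm_solution_conditions.
- case=> p_B1 p_B2.
  have [a [a_init a_rec]] := delta_init_exists p_monic size_p char_Phi.
  by exists (signed_hankel eps m a); apply: solution.
- by move=> p_B1 p_B2 a; apply: solution.
Qed.
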